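(* Let $X$ be a setoid. Define $\mathsf{join}:\mathfrak{S}(\mathfrak{S}X)\to\mathfrak{S}X$ by $\mathsf{join}\ \hat f := f$ and $$\mathsf{join}(\mathsf{glue}\ o\ F\ G) := \mathsf{glue}\ o\ \big(\mathsf{join}(\mathsf{map}\,(\lambda x.\,\mathsf{SplitL}\ x\ o)\,F)\big)\ \big(\mathsf{join}(\mathsf{map}\,(\lambda x.\,\mathsf{SplitR}\ x\ o)\,G)\big).$$ Then $(\mathfrak{S}, \mathsf{const}, \mathsf{map}, \mathsf{join})$ is a monad up to $\asymp$: $\mathsf{join}$ and $\mathsf{map}\,\varphi$ (for respectful $\varphi$) respect $\asymp$, and for all $f\in\mathfrak{S}X$ and $H\in\mathfrak{S}(\mathfrak{S}(\mathfrak{S}X))$: $\mathsf{join}(\hat f)\asymp f$, $\mathsf{join}(\mathsf{map}\ \mathsf{const}\ f)\asymp f$, and $\mathsf{join}(\mathsf{join}\ H)\asymp\mathsf{join}(\mathsf{map}\ \mathsf{join}\ H)$.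
   Context: Step functions. For a type $X$, $\mathfrak{S}X$ is the inductive type of (formal, rational) step functions on $[0,1]$: it has the constructors $\mathsf{const}\ x$ for $x\in X$ (also written $\hat x$), and $\mathsf{glue}\ o\ f\ g$ for $o\in(0,1)\cap\mathbb{Q}$ and $f,g\in\mathfrak{S}X$. Split. For $a\in(0,1)\cap\mathbb{Q}$: $\mathsf{SplitL}\ \hat x\ a := \hat x$, $\mathsf{SplitR}\ \hat x\ a:=\hat x$, and $\mathsf{SplitL}(\mathsf{glue}\ o\ f_l\ f_r)\ a :=$ $\mathsf{SplitL}\ f_l\ (a/o)$ if $a<o$; $f_l$ if $a=o$; $\mathsf{glue}\ (o/a)\ f_l\ (\mathsf{SplitL}\ f_r\ \tfrac{a-o}{1-o})$ if $a>o$. $\mathsf{SplitR}(\mathsf{glue}\ o\ f_l\ f_r)\ a :=$ $\mathsf{glue}\ \tfrac{o-a}{1-a}\ (\mathsf{SplitR}\ f_l\ (a/o))\ f_r$ if $a<o$; $f_r$ if $a=o$; $\mathsf{SplitR}\ f_r\ \tfrac{a-o}{1-o}$ if $a>o$. Map and ap. $\mathsf{map}\ \varphi\ \hat x := \widehat{\varphi x}$, $\mathsf{map}\ \varphi\ (\mathsf{glue}\ o\ f\ g):=\mathsf{glue}\ o\ (\mathsf{map}\ \varphi\ f)(\mathsf{map}\ \varphi\ g)$. For $F\in\mathfrak{S}(X\Rightarrow Y)$, $x\in\mathfrak{S}X$: $\hat\varphi @ x := \mathsf{map}\ \varphi\ x$, and $(\mathsf{glue}\ o\ F_l\ F_r)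 @ x := \mathsf{glue}\ o\ (F_l @ \mathsf{SplitL}\ x\ o)\ (F_r @ \mathsf{SplitR}\ x\ o)$. Write $f\{\circledast\}g := (\lambda u v. u\circledast v)\circ f @ g$ where $\varphi\circ x:=\mathsf{map}\ \varphi\ x$. Fold. $\mathsf{fold}\ \varphi\ \psi\ \hat x:=\varphi x$, $\mathsf{fold}\ \varphi\ \psi\ (\mathsf{glue}\ o\ f\ g) := \psi\ o\ (\mathsf{fold}\ \varphi\ \psi\ f)(\mathsf{fold}\ \varphi\ \psi\ g)$. $\mathsf{fold}_\star$ is $\mathsf{fold}\ \mathrm{id}\ (\lambda o\,p\,q.\ p\wedge q)$. Equivalence. For a setoid $X$ and $f,g\in\mathfrak{S}X$, $f\asymp_{\mathfrak{S}X} g := \mathsf{fold}_\star(f\{\asymp_X\}g)$; $\mathfrak{S}X$ is itself a setoid with this relation, so $\mathfrak{S}(\mathfrak{S}X)$ etc. carry the iterated relation. *)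

From HB Require Import structures.
From mathcomp Require Import all_boot all_order all_algebra.
From Stdlib Require Import RelationClasses.
Set Implicit Arguments. Unset Strict Implicit. Unset Printing Implicit Defensive.
Import Order.TTheory GRing.Theory Num.Theory.
Local Open Scope ring_scope.

Definition Q01 := {q : rat | (0 < q) && (q < 1)}.

Lemma half01_proof : (0 < 1/2 :> rat) && (1/2 < 1 :> rat).
Proof. by []. Qed.

Definition half01 : Q01 := exist _ (1/2) half01_proof.

(* Smart constructor: q itself when q lies in (0,1); only ever used on
   values that do lie in (0,1). *)
Definition mkQ01 (q : rat) : Q01 := insubd half01 q.

(* Step functions on [0,1]. *)
Inductive Step (X : Type) : Type :=
| const : X -> Step X
| glue : Q01 -> Step X -> Step X -> Step X.
Arguments const {X} x.
Arguments glue {X} o f g.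

Fixpoint SplitL (X : Type) (f : Step X) (a : Q01) : Step X :=
  match f with
  | const x => const x
  | glue o fl fr =>
      let a' := val a in let o' := val o in
      if a' < o' then SplitL fl (mkQ01 (a' / o'))
      else if a' == o' then fl
      else glue (mkQ01 (o' / a')) fl (SplitL fr (mkQ01 ((a' - o') / (1 - o'))))
  end.

Fixpoint SplitR (X : Type) (f : Step X) (a : Q01) : Step X :=
  match f with
  | const x => const x
  | glue o fl fr =>
      let a' := val a in let o' := val o in
      if a' < o' then glue (mkQ01 ((o' - a') / (1 - a'))) (SplitR fl (mkQ01 (a' / o'))) fr
      else if a' == o' then fr
      else SplitR fr (mkQ01 ((a' - o') / (1 - o')))
  end.

Fixpoint smap (X Y : Type) (phi : X -> Y) (f : Step X) : Step Y :=
  match f with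
  | const x => const (phi x)
  | glue o f g => glue o (smap phi f) (smap phi g)
  end.

Fixpoint sap (X Y : Type) (F : Step (X -> Y)) (x : Step X) : Step Y :=
  match F with
  | const phi => smap phi x
  | glue o Fl Fr => glue o (sap Fl (SplitL x o)) (sap Fr (SplitR x o))
  end.

Fixpoint sfold (X Y : Type) (phi : X -> Y) (psi : Q01 -> Y -> Y -> Y)
  (f : Step X) : Y :=
  match f with
  | const x => phi x
  | glue o f g => psi o (sfold phi psi f) (sfold phi psi g)
  end.

Definition fold_star (f : Step Prop) : Prop :=
  sfold id (fun _ p q => p /\ q) f.

Definition slift2 (X Y Z : Type) (op : X -> Y -> Z) (f : Step X) (g : Step Y)
  : Step Z := sap (smap (fun u v => op u v) f) g.

Definition seqv (X : Type) (R : X -> X -> Prop) (f g : Step X) : Prop :=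
  fold_star (slift2 R f g).

(* join, defined by an auxiliary structural recursion; the defining
   equations of the paper are proved below as [join_const], [join_glue]. *)
Fixpoint joinAux (X Y : Type) (F : Step Y) (k : Y -> Step X) : Step X :=
  match F with
  | const f => k f
  | glue o F G => glue o (joinAux F (fun x => SplitL (k x) o))
                         (joinAux G (fun x => SplitR (k x) o))
  end.

Definition join (X : Type) (F : Step (Step X)) : Step X := joinAux F id.

Lemma joinAux_map (X Y Z : Type) (h : Z -> Y) (F : Step Z) (k : Y -> Step X) :
  joinAux (smap h F) k = joinAux F (fun z => k (h z)).
Proof.
elim: F k => [z|o F IHF G IHG] k //=.
by rewrite IHF IHG.
Qed.

Lemma join_const (X : Type) (f : Step X) : join (const f) = f.
Proof. by []. Qed.

Lemma join_glue (X : Type) (o : Q01) (F G : Step (Step X)) :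
  join (glue o F G) =
  glue o (join (smap (fun x => SplitL x o) F)) (join (smap (fun x => SplitR x o) G)).
Proof. by rewrite /join /= !joinAux_map. Qed.

From mathcomp Require Import all_boot all_order all_algebra ring.
From Stdlib Require Import RelationClasses.
Set Implicit Arguments. Unset Strict Implicit. Unset Printing Implicit Defensive.
Import Order.TTheory GRing.Theory Num.Theory.
Local Open Scope ring_scope.

(* The proof is semantic.  A formal step function [f] denotes a
   piecewise-constant function on any half-open rational interval [lo, hi):
   [glue o f g] puts [f] on the left part, rescaled to [lo, cut o lo hi), and
   [g] on the right part.  We first show that every operation of the paper is
   computed pointwise by this semantics on the interval it lives on:
   [SplitL f a] / [SplitR f a] are the restrictions of [f] to the left / right
   subinterval cut at ratio [a], [smap] and [sap] act pointwise, [fold_star]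
   is universal quantification over the interval, and [join F] evaluates the
   step function [F t] at [t].  Consequently [f ≍_R g] holds iff [R] holds
   pointwise on [0, 1) ([seqv_pointwise]).  Both respect properties and the
   three monad laws then become pointwise statements: the former follow from
   the hypotheses at each point, the latter from equalities of evaluations
   and reflexivity of [R]. *)

Lemma Q01_bounds (q : Q01) : 0 < val q /\ val q < 1.
Proof. by case: q => q /= /andP. Qed.

Lemma mkQ01_ratioK (p q : rat) : 0 < p -> p < q -> val (mkQ01 (p / q)) = p / q.
Proof.
move=> p_gt0 lt_pq; have q_gt0 : 0 < q by apply: lt_trans lt_pq.
rewrite /mkQ01 insubdK //; apply/andP; split; first exact: divr_gt0.
by rewrite ltr_pdivrMr // mul1r.
Qed.

Definition cut (o lo hi : rat) : rat := lo + o * (hi - lo).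

Lemma cut_bounds (o lo hi : rat) : 0 < o -> o < 1 -> lo < hi ->
  lo < cut o lo hi /\ cut o lo hi < hi.
Proof.
move=> o_gt0 o_lt1 lt_lohi; have d_gt0 : 0 < hi - lo by rewrite subr_gt0.
by rewrite /cut ltrDl -ltrBrDl mulr_gt0 // gtr_pMl.
Qed.

Lemma cut_ltr (p q lo hi : rat) : lo < hi -> (cut p lo hi < cut q lo hi) = (p < q).
Proof. by move=> lt_lohi; rewrite /cut ltrD2l ltr_pM2r // subr_gt0. Qed.

Lemma cut_cutL (p q lo hi : rat) : p != 0 -> cut (q / p) lo (cut p lo hi) = cut q lo hi.
Proof. by move=> p_neq0; rewrite /cut; field. Qed.

Lemma cut_cutR (p q lo hi : rat) : 1 - p != 0 ->
  cut ((q - p) / (1 - p)) (cut p lo hi) hi = cut q lo hi.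
Proof. by move=> p_neq1; rewrite /cut; field. Qed.

Lemma cut_rescaleL (a o : Q01) (lo hi : rat) : val a < val o ->
  cut (val a) lo hi = cut (val (mkQ01 (val a / val o))) lo (cut (val o) lo hi).
Proof.
have [[a_gt0 _] [o_gt0 _]] := (Q01_bounds a, Q01_bounds o).
by move=> lt_ao; rewrite mkQ01_ratioK // cut_cutL // lt0r_neq0.
Qed.

Lemma cut_rescaleR (a o : Q01) (lo hi : rat) : val o < val a ->
  cut (val a) lo hi =
  cut (val (mkQ01 ((val a - val o) / (1 - val o)))) (cut (val o) lo hi) hi.
Proof.
have [[_ a_lt1] [_ o_lt1]] := (Q01_bounds a, Q01_bounds o).
move=> lt_oa; rewrite mkQ01_ratioK ?subr_gt0 ?ltrD2r //.
by rewrite cut_cutR // lt0r_neq0 // subr_gt0.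
Qed.

Fixpoint eval (X : Type) (f : Step X) (lo hi t : rat) : X :=
  match f with
  | const x => x
  | glue o f g => if t < cut (val o) lo hi then eval f lo (cut (val o) lo hi) t
                  else eval g (cut (val o) lo hi) hi t
  end.

Lemma eval_SplitL (X : Type) (f : Step X) (a : Q01) (lo hi t : rat) :
  lo < hi -> lo <= t -> t < cut (val a) lo hi ->
  eval (SplitL f a) lo (cut (val a) lo hi) t = eval f lo hi t.
Proof.
elim: f a lo hi t => [x|o fl IHl fr IHr] a lo hi t //= lt_lohi le_lot lt_ta.
have [o_gt0 o_lt1] := Q01_bounds o.
have [lt_lo_o lt_o_hi] := cut_bounds o_gt0 o_lt1 lt_lohi.
case: ltgtP => [lt_ao|lt_oa|eq_ao].
- have lt_t_o : t < cut (val o) lo hi by rewrite (lt_trans lt_ta) ?cut_ltr.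
  by rewrite lt_t_o (cut_rescaleL _ _ lt_ao) IHl // -cut_rescaleL.
- rewrite /= -cut_rescaleL //; case: ltP => // le_o_t.
  by rewrite (cut_rescaleR _ _ lt_oa) IHr // -cut_rescaleR.
- by rewrite -eq_ao lt_ta.
Qed.

Lemma eval_SplitR (X : Type) (f : Step X) (a : Q01) (lo hi t : rat) :
  lo < hi -> cut (val a) lo hi <= t -> t < hi ->
  eval (SplitR f a) (cut (val a) lo hi) hi t = eval f lo hi t.
Proof.
elim: f a lo hi t => [x|o fl IHl fr IHr] a lo hi t //= lt_lohi le_at lt_thi.
have [o_gt0 o_lt1] := Q01_bounds o.
have [lt_lo_o lt_o_hi] := cut_bounds o_gt0 o_lt1 lt_lohi.
case: ltgtP => [lt_ao|lt_oa|eq_ao].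
- rewrite /= -cut_rescaleR //; case: ltP => // lt_t_o.
  by rewrite (cut_rescaleL _ _ lt_ao) IHl // -cut_rescaleL.
- have lt_o_t : cut (val o) lo hi < t by rewrite (lt_le_trans _ le_at) ?cut_ltr.
  rewrite ltNge (ltW lt_o_t) /=.
  by rewrite (cut_rescaleR _ _ lt_oa) IHr // -cut_rescaleR.
- by rewrite -eq_ao ltNge le_at.
Qed.

Lemma eval_smap (X Y : Type) (phi : X -> Y) (f : Step X) (lo hi t : rat) :
  eval (smap phi f) lo hi t = phi (eval f lo hi t).
Proof. by elim: f lo hi => [x|o f IHf g IHg] lo hi //=; case: ifP. Qed.

Lemma eval_sap (X Y : Type) (F : Step (X -> Y)) (x : Step X) (lo hi t : rat) :
  lo < hi -> lo <= t -> t < hi ->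
  eval (sap F x) lo hi t = eval F lo hi t (eval x lo hi t).
Proof.
elim: F x lo hi t => [phi|o Fl IHl Fr IHr] x lo hi t lt_lohi le_lot lt_thi /=.
  by rewrite eval_smap.
have [o_gt0 o_lt1] := Q01_bounds o.
have [lt_lo_o lt_o_hi] := cut_bounds o_gt0 o_lt1 lt_lohi.
by case: ltP => [lt_t_o | le_o_t]; rewrite ?IHl ?IHr ?eval_SplitL ?eval_SplitR.
Qed.

Lemma eval_joinAux (X Y : Type) (F : Step Y) (k : Y -> Step X) (lo hi t : rat) :
  lo < hi -> lo <= t -> t < hi ->
  eval (joinAux F k) lo hi t = eval (k (eval F lo hi t)) lo hi t.
Proof.
elim: F k lo hi t => [y|o Fl IHl Fr IHr] k lo hi t lt_lohi le_lot lt_thi //=.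
have [o_gt0 o_lt1] := Q01_bounds o.
have [lt_lo_o lt_o_hi] := cut_bounds o_gt0 o_lt1 lt_lohi.
by case: ltP => [lt_t_o | le_o_t]; rewrite ?IHl ?IHr ?eval_SplitL ?eval_SplitR.
Qed.

Lemma eval_join (X : Type) (F : Step (Step X)) (lo hi t : rat) :
  lo < hi -> lo <= t -> t < hi ->
  eval (join F) lo hi t = eval (eval F lo hi t) lo hi t.
Proof. exact: eval_joinAux. Qed.

Lemma fold_star_pointwise (P : Step Prop) (lo hi : rat) : lo < hi ->
  fold_star P <-> (forall t, lo <= t -> t < hi -> eval P lo hi t).
Proof.
elim: P lo hi => [p|o Pl IHl Pr IHr] lo hi lt_lohi /=.
  by split=> [//|]; apply; rewrite ?lexx.
have [o_gt0 o_lt1] := Q01_bounds o.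
have [lt_lo_o lt_o_hi] := cut_bounds o_gt0 o_lt1 lt_lohi.
change (fold_star Pl /\ fold_star Pr <->
  (forall t, lo <= t -> t < hi -> eval (glue o Pl Pr) lo hi t)).
rewrite (IHl lo (cut (val o) lo hi)) // (IHr (cut (val o) lo hi) hi) //=.
split=> [[on_left on_right] t le_lot lt_thi | all_t].
  by case: ltP => [lt_t_o | le_o_t]; [apply: on_left | apply: on_right].
split=> t le_t lt_t.
- by have := all_t t le_t (lt_trans lt_t lt_o_hi); rewrite lt_t.
- by have := all_t t (le_trans (ltW lt_lo_o) le_t) lt_t; rewrite ltNge le_t.
Qed.

Lemma seqv_pointwise (X : Type) (R : X -> X -> Prop) (f g : Step X) :
  seqv R f g <-> (forall t, 0 <= t -> t < 1 -> R (eval f 0 1 t) (eval g 0 1 t)).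
Proof.
rewrite /seqv /slift2 fold_star_pointwise ?ltr01 //.
by split=> Rfg t le0t lt1t; have := Rfg t le0t lt1t; rewrite eval_sap ?ltr01 // eval_smap.
Qed.

Lemma join_respects (X : Type) (R : X -> X -> Prop) (F G : Step (Step X)) :
  seqv (seqv R) F G -> seqv R (join F) (join G).
Proof.
move=> /seqv_pointwise RFG; apply/seqv_pointwise => t le0t lt1t.
have /seqv_pointwise RFGt := RFG t le0t lt1t.
by rewrite !eval_join ?ltr01 //; apply: RFGt.
Qed.

Lemma smap_respects (X Y : Type) (R : X -> X -> Prop) (S : Y -> Y -> Prop)
    (phi : X -> Y) : (forall x y, R x y -> S (phi x) (phi y)) ->
  forall f g : Step X, seqv R f g -> seqv S (smap phi f) (smap phi g).
Proof.
move=> phi_resp f g /seqv_pointwise Rfg; apply/seqv_pointwise => t le0t lt1t.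
by rewrite !eval_smap; apply/phi_resp/Rfg.
Qed.

Lemma seqv_of_eval_eq (X : Type) (R : X -> X -> Prop) (f g : Step X) :
  Reflexive R -> (forall t, 0 <= t -> t < 1 -> eval f 0 1 t = eval g 0 1 t) ->
  seqv R f g.
Proof. by move=> R_refl efg; apply/seqv_pointwise => t le0t lt1t; rewrite efg. Qed.

Lemma eval_join_smap_const (X : Type) (f : Step X) (t : rat) :
  0 <= t -> t < 1 -> eval (join (smap const f)) 0 1 t = eval f 0 1 t.
Proof. by move=> le0t lt1t; rewrite eval_join ?ltr01 // eval_smap. Qed.

Lemma eval_join_assoc (X : Type) (H : Step (Step (Step X))) (t : rat) :
  0 <= t -> t < 1 ->
  eval (join (join H)) 0 1 t = eval (join (smap (@join X) H)) 0 1 t.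
Proof. by move=> le0t lt1t; rewrite !eval_join ?ltr01 // eval_smap eval_join ?ltr01. Qed.

Theorem mainTheorem10 :
  (* join respects the (iterated) equivalence *)
  (forall (X : Type) (R : X -> X -> Prop), Equivalence R ->
     forall F G : Step (Step X),
       seqv (seqv R) F G -> seqv R (join F) (join G)) /\
  (* map phi respects the equivalence, for respectful phi *)
  (forall (X Y : Type) (R : X -> X -> Prop) (S : Y -> Y -> Prop),
     Equivalence R -> Equivalence S ->
     forall phi : X -> Y, (forall x y, R x y -> S (phi x) (phi y)) ->
     forall f g : Step X, seqv R f g -> seqv S (smap phi f) (smap phi g)) /\
  (* monad laws up to the equivalence *)
  (forall (X : Type) (R : X -> X -> Prop), Equivalence R ->
     (forall f : Step X, seqv R (join (const f)) f) /\
     (forall f : Step X, seqv R (join (smap const f)) f) /\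
     (forall H : Step (Step (Step X)),
        seqv R (join (join H)) (join (smap (@join X) H)))).
Proof.
split; first by move=> X R _; apply: join_respects.
split; first by move=> X Y R S _ _; apply: smap_respects.
move=> X R R_equiv; split; [|split].
- by move=> f; apply: seqv_of_eval_eq.
- by move=> f; apply: seqv_of_eval_eq => t; apply: eval_join_smap_const.
- by move=> H; apply: seqv_of_eval_eq => t; apply: eval_join_assoc.
Qed.
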